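(* Let $\gamma > 1$ and let $I$ be a $\gamma$-stable instance of the metric Steiner tree problem with optimal Steiner tree $\mathrm{OPT}$. Suppose $ab$ and $bc$ are two distinct edges of $\mathrm{OPT}$. Then: (1) $w_{ac} > \gamma \cdot \max\{w_{ab}, w_{bc}\}$; (2) $\frac{2}{\gamma} w_{ac} > w_{ab} + w_{bc}$; (3) $(\gamma - 1) w_{ab} < w_{bc}$ and $(\gamma - 1) w_{bc} < w_{ab}$.
   Context: An instance of the metric Steiner tree problem consists of a finite set $V$ of points of a metric space with metric $d$, a set $T \subseteq V$ of terminals, and the complete graph on $V$ with edge weights $w_{uv} = d(u,v)$. Points of $V \setminus T$ are Steiner points. A Steiner tree is a tree in this complete graph whose vertex set contains all of $T$; its weight is the sum of its edge weights. For $\gamma > 1$, the instance is $\gamma$-stable if it has a minimum-weight Steiner tree $\mathrm{OPT}$ such that for every $w' : V \times V \to \mathbb{R}_{\ge 0}$ with $w_{uv} \le w'_{uv} \le \gamma w_{uv}$ for all $u,v$, every minimum-weight Steiner tree with respect to $w'$ equals $\mathrm{OPT}$. *)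

From HB Require Import structures.
From mathcomp Require Import all_boot all_order all_algebra.
Set Implicit Arguments. Unset Strict Implicit. Unset Printing Implicit Defensive.
Import Order.TTheory GRing.Theory Num.Theory.
Local Open Scope ring_scope.

Definition is_metric (R : realFieldType) (V : finType) (d : V -> V -> R) : Prop :=
  [/\ forall x y, d x y = 0 <-> x = y,
      forall x y, d x y = d y x
    & forall x y z, d x z <= d x y + d y z].

(* A tree in the complete graph on V: a vertex set S together with its edge
   set, represented as a symmetric irreflexive set of ordered pairs
   (each undirected edge uv appears as (u,v) and (v,u)). *)
Definition graph (V : finType) := ({set V} * {set V * V})%type.

Definition is_tree (V : finType) (t : graph V) : Prop :=
  let S := t.1 in let E := t.2 in
  [/\ S != set0,
      (forall p, p \in E -> (p.1 \in S) && (p.2 \in S)),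
      (forall p, p \in E -> p.1 != p.2) /\
      (forall u v, (u, v) \in E -> (v, u) \in E),
      (forall x y, x \in S -> y \in S ->
         connect (fun u v : V => (u, v) \in E) x y)
    & #|E| = ((#|S| - 1).*2)%N].

Definition is_steiner_tree (V : finType) (T : {set V}) (t : graph V) : Prop :=
  is_tree t /\ T \subset t.1.

(* Weight of t w.r.t. edge weights f: each undirected edge is counted via both
   orientations, hence the factor 1/2. *)
Definition tree_weight (R : realFieldType) (V : finType) (f : V -> V -> R)
  (t : graph V) : R :=
  (\sum_(p in t.2) f p.1 p.2) / 2%:R.

Definition is_min_steiner_tree (R : realFieldType) (V : finType)
  (f : V -> V -> R) (T : {set V}) (t : graph V) : Prop :=
  is_steiner_tree T t /\
  forall t', is_steiner_tree T t' -> tree_weight f t <= tree_weight f t'.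

Definition stable_with (R : realFieldType) (V : finType) (d : V -> V -> R)
  (T : {set V}) (gamma : R) (OPT : graph V) : Prop :=
  is_min_steiner_tree d T OPT /\
  forall w' : V -> V -> R,
    (forall u v, d u v <= w' u v <= gamma * d u v) ->
    forall t, is_min_steiner_tree w' T t -> t = OPT.

(* Let ab and bc be edges of OPT. Then ac is not an edge of OPT: otherwise
   deleting ab would leave a connected graph on the vertices of OPT with fewer
   edges than a tree has. So exchanging ab for ac gives another Steiner tree.
   Multiplying the weight of the single edge ab by gamma is an admissible
   perturbation under which OPT must stay the unique optimum, so the exchanged
   tree is strictly heavier: gamma d(a,b) < d(a,c). All three inequalities
   follow from this, its mirror image gamma d(c,b) < d(c,a), and the triangle
   inequality d(a,c) <= d(a,b) + d(b,c). *)

From HB Require Import structures.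
From mathcomp Require Import all_boot all_order all_algebra.
From mathcomp Require Import lra.
From mathcomp Require Import boolp.
Import Order.TTheory GRing.Theory Num.Theory.

Set Implicit Arguments.
Unset Strict Implicit.
Unset Printing Implicit Defensive.

Section EdgeSets.

Variable V : finType.
Implicit Types (a b c u v : V) (S X : {set V}) (E F : {set V * V}).

Definition edge_rel E : rel V := fun u v => (u, v) \in E.

Definition sym_edges E := forall u v, (u, v) \in E -> (v, u) \in E.

Definition uedge a b : {set V * V} := [set (a, b); (b, a)].

Definition induced_edges E X := [set p in E | (p.1 \in X) && (p.2 \in X)].

Definition swap_edge E a b c := (E :\: uedge a b) :|: uedge a c.

Lemma mem_uedge a b u v :
  ((u, v) \in uedge a b) = (u == a) && (v == b) || (u == b) && (v == a).
Proof. by rewrite !inE !xpair_eqE. Qed.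

Lemma card_uedge a b : a != b -> #|uedge a b| = 2.
Proof. by move=> ab; rewrite cards2 xpair_eqE negb_and ab. Qed.

Lemma uedge_sym a b : uedge a b = uedge b a.
Proof. exact: setUC. Qed.

Lemma mem_uedgeC a b u v : ((v, u) \in uedge a b) = ((u, v) \in uedge a b).
Proof. by rewrite !mem_uedge orbC (andbC (v == b)) (andbC (v == a)). Qed.

Lemma disjoint_uedge a b c : [disjoint uedge a b & uedge a c] = (b != c).
Proof.
apply/idP/idP => [disj | bc].
  apply/eqP => bc; have := disjointFr disj (_ : (a, b) \in uedge a b).
  by rewrite -bc mem_uedge !eqxx => /(_ isT).
rewrite -setI_eq0; apply/eqP/setP => -[u v]; rewrite !inE !xpair_eqE; apply/negbTE/negP.
case/andP=> /orP[]/andP[/eqP-> /eqP->] /orP[]/andP[/eqP ? /eqP ?];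
  by subst; rewrite eqxx in bc.
Qed.

Lemma disjoint_uedge_notin E a b :
  sym_edges E ->
  (a, b) \notin E -> [disjoint uedge a b & E].
Proof.
move=> Esym abE; rewrite disjoints_subset subUset !sub1set !inE abE.
by apply: contra abE => /Esym.
Qed.

Lemma sym_setD_uedge E a b :
  sym_edges E ->
  sym_edges (E :\: uedge a b).
Proof. by move=> Esym u v; rewrite !in_setD mem_uedgeC => /andP[-> /Esym]. Qed.

Lemma uedge_subset E a b :
  sym_edges E ->
  (a, b) \in E -> uedge a b \subset E.
Proof. by move=> Esym abE; rewrite subUset !sub1set abE Esym. Qed.

Lemma uedge_subset_setD E a b c :
  sym_edges E ->
  (a, c) \in E -> b != c -> uedge a c \subset E :\: uedge a b.
Proof. by move=> Esym acE bc; rewrite subsetD uedge_subset // disjoint_sym disjoint_uedge. Qed.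

Lemma connect_reroute E F a b c :
  E :\: uedge a b \subset F -> uedge a c \subset F -> uedge b c \subset F ->
  subrel (connect (edge_rel E)) (connect (edge_rel F)).
Proof.
move=> /subsetP EF /subsetP acF /subsetP bcF.
apply: connect_sub => u v uvE.
case: (boolP ((u, v) \in uedge a b)) => [|uv_ab]; last first.
  by apply: connect1; apply: EF; rewrite inE uv_ab.
rewrite mem_uedge => /orP[] /andP[/eqP-> /eqP->].
- apply: (@connect_trans _ _ c); apply: connect1; [apply: acF | apply: bcF];
    by rewrite !inE eqxx ?orbT.
- apply: (@connect_trans _ _ c); apply: connect1; [apply: bcF | apply: acF];
    by rewrite !inE eqxx ?orbT.
Qed.

Section ConnectedEdges.

Variables (S : {set V}) (E : {set V * V}).
Hypothesis Esym : sym_edges E.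
Hypothesis Ein : forall p, p \in E -> (p.1 \in S) && (p.2 \in S).
Hypothesis Econ : forall x y, x \in S -> y \in S -> connect (edge_rel E) x y.

Lemma connect_exit X x y : x \in X -> y \notin X -> connect (edge_rel E) x y ->
  [exists p in E, (p.1 \in X) && (p.2 \notin X)].
Proof.
move=> xX yX xy; apply: contraT; rewrite negb_exists_in => /forall_inP noexit.
have clX : closed (edge_rel E) X.
  apply: intro_closed => [|u v uvE uX].
    by apply: sym_connect_sym => u v; apply/idP/idP => /Esym.
  by move: (noexit (u, v) uvE); rewrite /= uX negbK.
by move: (closed_connect clX xy); rewrite xX (negbTE yX).
Qed.

Lemma card_induced_edges_grow k : k < #|S| ->
  exists X, [/\ X \subset S, #|X| = k.+1 & k.*2 <= #|induced_edges E X|].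
Proof.
elim: k => [|k IHk] ltkS.
  have [r rS] : exists r, r \in S by apply/card_gt0P.
  by exists [set r]; rewrite sub1set rS cards1.
have [X [XS cardX cardEX]] := IHk (ltnW ltkS).
have [y yS yX] : exists2 y, y \in S & y \notin X.
  by apply/subsetPn; apply: contraTN ltkS => /subset_leq_card; rewrite cardX leqNgt.
have [x xX] : exists x, x \in X by apply/card_gt0P; rewrite cardX.
have /exists_inP[[u v] uvE /andP[/= uX vX]] :=
  connect_exit xX yX (Econ (subsetP XS x xX) yS).
have vS : v \in S by case/andP: (Ein uvE).
have uv : u != v by apply: contraNneq vX => <-.
exists (v |: X); split.
- by rewrite subUset sub1set vS XS.
- by rewrite cardsU1 vX cardX.
have new_edges : uedge u v :|: induced_edges E X \subset induced_edges E (v |: X).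
  apply/subsetP => p; rewrite !inE -!orbA => /or3P[] /=.
  + by move=> /eqP-> /=; rewrite uvE !eqxx uX !orbT.
  + by move=> /eqP-> /=; rewrite Esym // !eqxx uX !orbT.
  + by case/and3P=> -> -> ->; rewrite !orbT.
have disj : uedge u v :&: induced_edges E X = set0.
  apply/setP => -[p1 p2]; rewrite !inE !xpair_eqE.
  apply/negP => /and4P[/orP[] /andP[/eqP-> /eqP->] _ /= h1 h2];
    by move: vX; rewrite ?h1 ?h2.
apply: leq_trans (subset_leq_card new_edges).
by rewrite cardsU disj cards0 subn0 card_uedge // doubleS add2n !ltnS.
Qed.

Lemma card_edges_connected : (#|S| - 1).*2 <= #|E|.
Proof.
case: (posnP #|S|) => [-> //|].
rewrite -ltn_predL => /card_induced_edges_grow[X [_ _ cardEX]].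
apply: leq_trans (leq_trans _ cardEX) (subset_leq_card _); first by rewrite subn1.
by apply/subsetP => p; rewrite inE => /andP[].
Qed.

End ConnectedEdges.

Lemma card_setDU (I : finType) (E A B : {set I}) :
  A \subset E -> [disjoint B & E] -> #|(E :\: A) :|: B| + #|A| = #|E| + #|B|.
Proof.
move=> AE BE; have := cardsID A E; rewrite (setIidPr AE) => <-.
have BEA : (E :\: A) :&: B = set0.
  by apply: disjoint_setI0; rewrite disjoint_sym; apply: disjointWr BE; apply: subsetDl.
by rewrite cardsU BEA cards0 subn0 addnC addnA.
Qed.

Lemma tree_triangle_free S E a b c : is_tree (S, E) ->
  (a, b) \in E -> (b, c) \in E -> a != c -> (a, c) \notin E.
Proof.
case=> /= _ Ein [Eirr Esym] Econ cardE abE bcE ac; apply/negP => acE.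
have ab : a != b := Eirr _ abE.
have bc : b != c := Eirr _ bcE.
set E2 := E :\: uedge a b.
have acE2 : uedge a c \subset E2 by apply: uedge_subset_setD; rewrite // eq_sym.
have bcE2 : uedge b c \subset E2.
  by rewrite /E2 (uedge_sym a b); apply: uedge_subset_setD.
have E2in p : p \in E2 -> (p.1 \in S) && (p.2 \in S) by case/setDP => /Ein.
have E2con x y : x \in S -> y \in S -> connect (edge_rel E2) x y.
  by move=> xS yS; apply: connect_reroute (subxx _) acE2 bcE2 _ _ (Econ x y xS yS).
have E_ge2 : 2 <= #|E| by rewrite -(card_uedge ab) subset_leq_card ?uedge_subset.
have := card_edges_connected (sym_setD_uedge Esym) E2in E2con.
by rewrite cardsDS ?uedge_subset // card_uedge // -cardE leqNgt ltn_subrL (ltnW E_ge2).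
Qed.

Lemma is_tree_swap S E a b c : is_tree (S, E) ->
  (a, b) \in E -> (b, c) \in E -> a != c -> is_tree (S, swap_edge E a b c).
Proof.
move=> tree abE bcE ac; have acE := tree_triangle_free tree abE bcE ac.
case: tree => /= Sn0 Ein [Eirr Esym] Econ cardE.
have ab : a != b := Eirr _ abE.
have /andP[/= aS _] := Ein _ abE.
have /andP[/= _ cS] := Ein _ bcE.
have swapP p : p \in swap_edge E a b c -> p \in E \/ p \in uedge a c.
  by rewrite in_setU in_setD => /orP[/andP[_ ->]|->]; [left|right].
have bcE2 : uedge b c \subset E :\: uedge a b.
  by rewrite (uedge_sym a b); apply: uedge_subset_setD.
have disj := disjoint_uedge_notin Esym acE.
split => //=.
- move=> p /swapP[/Ein //|]; rewrite !inE => /orP[]/eqP-> /=; by rewrite aS cS.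
- split=> [p /swapP[/Eirr //|]|u v]; first by rewrite !inE => /orP[]/eqP-> //=; rewrite eq_sym.
  case/setUP=> [/(sym_setD_uedge Esym) vuE | uv]; apply/setUP; [left | right] => //.
  by rewrite mem_uedgeC.
- move=> x y xS yS.
  apply: connect_reroute (subsetUl _ _) (subsetUr _ _) _ _ _ (Econ x y xS yS).
  exact: subset_trans bcE2 (subsetUl _ _).
- have := card_setDU (uedge_subset Esym abE) disj.
  by rewrite !card_uedge // cardE => /addIn.
Qed.

End EdgeSets.

Local Open Scope ring_scope.

Lemma sum_setDU (I : finType) (M : nmodType) (F : I -> M) (E A B : {set I}) :
  A \subset E -> [disjoint B & E] ->
  \sum_(p in (E :\: A) :|: B) F p + \sum_(p in A) F p
    = \sum_(p in E) F p + \sum_(p in B) F p.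
Proof.
move=> AE BE.
have -> : \sum_(p in E) F p = \sum_(p in A) F p + \sum_(p in E :\: A) F p.
  by rewrite (big_setID (A := E) A) (setIidPr AE).
have disj : [disjoint E :\: A & B].
  by rewrite disjoint_sym; apply: disjointWr BE; apply: subsetDl.
have -> : \sum_(p in (E :\: A) :|: B) F p = \sum_(p in E :\: A) F p + \sum_(p in B) F p.
  by rewrite (eq_bigl [predU E :\: A & B]) ?bigU // => p; rewrite !inE.
by rewrite addrAC (addrC (\sum_(p in E :\: A) F p)).
Qed.

Lemma sum_uedge (V : finType) (M : nmodType) (F : V * V -> M) a b :
  a != b -> \sum_(p in uedge a b) F p = F (a, b) + F (b, a).
Proof.
by move=> ab; rewrite big_setU1 ?big_set1 // inE xpair_eqE negb_and ab.
Qed.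

Lemma exists_minimizer disp (T : orderType disp) (U : finType) (P : U -> Prop)
    (F : U -> T) x0 :
  P x0 -> exists2 x, P x & forall y, P y -> (F x <= F y)%O.
Proof.
move=> /asboolP Px0; case: (arg_minP (P := fun x => `[< P x >]) F Px0) => x /asboolP Px minx.
by exists x => // y /asboolP /minx.
Qed.

Section Weights.

Variables (R : realFieldType) (V : finType).
Implicit Types (d w : V -> V -> R) (a b c : V).

Lemma metric_ge0 d : is_metric d -> forall x y, 0 <= d x y.
Proof.
case=> d0 dsym dtri x y; have := dtri x y x.
rewrite (dsym y x) (proj2 (d0 x x) erefl); lra.
Qed.

Lemma tree_weight_swap w (S : {set V}) (E : {set V * V}) a b c :
  uedge a b \subset E -> [disjoint uedge a c & E] -> a != b -> a != c ->
  tree_weight w (S, swap_edge E a b c) + (w a b + w b a) / 2%:R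
    = tree_weight w (S, E) + (w a c + w c a) / 2%:R.
Proof.
move=> abE acE ab ac; rewrite /tree_weight /= -!mulrDl.
have := sum_setDU (fun p => w p.1 p.2) abE acE.
by rewrite !sum_uedge // => ->.
Qed.

Definition stretch_uedge (gamma : R) d a b : V -> V -> R :=
  fun u v => if (u, v) \in uedge a b then gamma * d u v else d u v.

Lemma stretch_uedge_bounds gamma d a b : 1 <= gamma -> (forall u v, 0 <= d u v) ->
  forall u v, d u v <= stretch_uedge gamma d a b u v <= gamma * d u v.
Proof.
move=> g1 d0 u v; have := d0 u v; rewrite /stretch_uedge.
by case: ifP => _ duv; apply/andP; split; nra.
Qed.

Lemma stable_weight_le_eq d T gamma OPT w t :
  stable_with d T gamma OPT -> (forall u v, d u v <= w u v <= gamma * d u v) ->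
  is_steiner_tree T t -> tree_weight w t <= tree_weight w OPT -> t = OPT.
Proof.
case=> [[OPTst _] stab] wb tst le_tOPT.
(* Stability only speaks about w-minimum trees, so we first need one to exist. *)
have [t0 t0st t0min] := exists_minimizer (tree_weight w) OPTst.
have t0E : t0 = OPT := stab w wb t0 (conj t0st t0min).
apply: (stab w wb); split=> // t' t'st.
by rewrite (le_trans le_tOPT) // -t0E; apply: t0min.
Qed.

End Weights.

Lemma stable_shortcut_gt (R : realFieldType) (V : finType) (d : V -> V -> R)
    (T : {set V}) (gamma : R) (OPT : graph V) (a b c : V) :
  is_metric d -> 1 < gamma -> stable_with d T gamma OPT ->
  (a, b) \in OPT.2 -> (b, c) \in OPT.2 -> a != c -> gamma * d a b < d a c.
Proof.
move=> dm g1 st; case: OPT st => S E st /= abE bcE ac.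
have [_ dsym _] := dm.
have [[[tree TS] _] _] := st.
have acE := tree_triangle_free tree abE bcE ac.
have /= [_ _ [Eirr Esym] _ _] := tree.
have ab : a != b := Eirr _ abE.
have bc : b != c := Eirr _ bcE.
have ac_ab : [disjoint uedge a b & uedge a c] by rewrite disjoint_uedge.
pose w := stretch_uedge gamma d a b.
have wb := stretch_uedge_bounds a b (ltW g1) (metric_ge0 dm).
have w_ab : w a b + w b a = 2%:R * (gamma * d a b).
  by rewrite /w /stretch_uedge !mem_uedge !eqxx orbT /= dsym mulr_natl mulr2n.
have w_ac : w a c + w c a = 2%:R * d a c.
  rewrite /w /stretch_uedge !(disjointFl ac_ab) ?mem_uedge ?eqxx ?orbT // dsym; lra.
rewrite ltNge; apply/negP => le_ac.
have swapE : (S, swap_edge E a b c) = (S, E).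
  apply: stable_weight_le_eq st wb _ _; first by split; [exact: is_tree_swap|].
  have := tree_weight_swap w S (uedge_subset Esym abE) (disjoint_uedge_notin Esym acE) ab ac.
  rewrite w_ab w_ac; nra.
have : (a, b) \in swap_edge E a b c by case: swapE => ->.
case/setUP => [/setDP[_]|]; first by rewrite mem_uedge !eqxx.
by rewrite (disjointFr ac_ab) // mem_uedge !eqxx.
Qed.

Theorem mainTheorem6 (R : realFieldType) (V : finType) (d : V -> V -> R)
  (T : {set V}) (gamma : R) (OPT : graph V) :
  is_metric d -> 1 < gamma -> stable_with d T gamma OPT ->
  forall a b c : V,
    (a, b) \in OPT.2 -> (b, c) \in OPT.2 -> a != c ->
    [/\ d a c > gamma * Num.max (d a b) (d b c),
        (2%:R / gamma) * d a c > d a b + d b c,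
        (gamma - 1) * d a b < d b c
      & (gamma - 1) * d b c < d a b].
Proof.
move=> dm g1 st a b c abE bcE ac.
have [_ dsym dtri] := dm.
have [[[/= [_ _ [_ Esym] _ _] _] _] _] := st.
have gt_ab := stable_shortcut_gt dm g1 st abE bcE ac.
have ca : c != a by rewrite eq_sym.
have gt_cb := stable_shortcut_gt dm g1 st (Esym _ _ bcE) (Esym _ _ abE) ca.
rewrite (dsym c a) (dsym c b) in gt_cb.
have tri_abc := dtri a b c.
have tri_bac := dtri b a c.
have g0 : 0 < gamma by apply: lt_trans g1.
split.
- by rewrite maxr_pMr ?ltW // gt_max gt_ab.
- by rewrite mulrAC ltr_pdivlMr //; lra.
- lra.
- rewrite (dsym b a) in tri_bac; lra.
Qed.
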